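(* Let $X$ be a topologically complete space and let $\mathcal A$ be a family of closed, locally finite, normal covers of $X$ satisfying conditions (I) and (II) below. Let $Y$ be a closed subset of $X$, and for $\alpha\in\mathcal A$ put $\alpha|Y=\{F\cap Y : F\in\alpha\}$ and $\mathcal A|Y=\{\alpha|Y:\alpha\in\mathcal A\}$. Then the family $\mathcal A|Y$ of covers of $Y$ satisfies conditions (I) and (II) with $X$ replaced by $Y$ (and open sets of $Y$ taken in the subspace topology), namely: (I$_Y$) for each open subset $U$ of $Y$ and each $x\in U$ there is $\alpha\in\mathcal A$ with $\bigcup\mathrm{star}_{\alpha|Y}(x)\subset U$; (II$_Y$) if for each $\alpha\in\mathcal A$ a member $f(\alpha)\in\alpha$ is chosen such that the collection $\{f(\alpha)\cap Y\}_{\alpha\in\mathcal A}$ has the finite intersection property, then $\bigcap_{\alpha\in\mathcal A}(f(\alpha)\cap Y)\neq\emptyset$.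
   Context: A topologically complete space is a Tychonoff space that is complete with respect to its finest uniformity. A cover $\alpha$ of $X$ is a closed, locally finite, normal cover if its members are closed, it is locally finite, and there is a partition of unity $\{\phi_{\alpha,V}:V\in\alpha\}$ subordinated to it: continuous $\phi_{\alpha,V}:X\to[0,1]$ with $\mathrm{cl}(\phi_{\alpha,V}^{-1}((0,1]))\subset\mathrm{int}(V)$ and $\sum_{V\in\alpha}\phi_{\alpha,V}=1$. For a cover $\alpha$ of a space and a subset $S$, $\mathrm{star}_\alpha(S)=\{V\in\alpha: V\cap S\neq\emptyset\}$, $\mathrm{star}_\alpha(x)=\mathrm{star}_\alpha(\{x\})$, and $\bigcup$ of a collection denotes the union of its members. Conditions on $\mathcal A$: (I) for each open $U\subset X$ and each $x\in U$ there exists $\alpha\in\mathcal A$ with $\bigcup\mathrm{star}_\alpha(x)\subset U$; (II) whenever a member $f(\alpha)\in\alpha$ is selected for each $\alpha\in\mathcal A$ and the collection $\{f(\alpha)\}$ has the finite intersection property, then $\bigcap_{\alpha\in\mathcal A}f(\alpha)\neq\emptyset$. *)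

From HB Require Import structures.
From mathcomp Require Import all_boot all_order all_algebra.
From mathcomp Require Import all_classical all_reals all_analysis.
From mathcomp Require Import Rstruct Rstruct_topology.
Set Implicit Arguments. Unset Strict Implicit. Unset Printing Implicit Defensive.
Import Order.TTheory GRing.Theory Num.Theory.
Local Open Scope classical_set_scope.
Local Open Scope ring_scope.

Section Defs.
Variable T : topologicalType.

Definition is_uniformity (U : set (set (T * T))) : Prop :=
  U setT /\
  (forall E F, U E -> E `<=` F -> U F) /\
  (forall E F, U E -> U F -> U (E `&` F)) /\
  (forall E, U E -> [set xy | xy.1 = xy.2] `<=` E) /\
  (forall E, U E -> U [set xy | E (xy.2, xy.1)]) /\
  (forall E, U E -> exists2 D, U D &
     (forall x y z, D (x, y) -> D (y, z) -> E (x, z))).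

Definition compatible_uniformity (U : set (set (T * T))) : Prop :=
  is_uniformity U /\
  forall (x : T) (A : set T),
    nbhs x A <-> exists2 E, U E & [set y | E (x, y)] `<=` A.

Definition finest_uniformity (U : set (set (T * T))) : Prop :=
  compatible_uniformity U /\
  forall V, compatible_uniformity V -> V `<=` U.

Definition cauchy_wrt (U : set (set (T * T))) (F : set_system T) : Prop :=
  forall E, U E -> exists2 A, F A & forall x y, A x -> A y -> E (x, y).

Definition complete_wrt (U : set (set (T * T))) : Prop :=
  forall F : set_system T, ProperFilter F -> cauchy_wrt U F ->
    exists x : T, F --> x.

Definition completely_regular_space : Prop :=
  forall (C : set T) (x : T), closed C -> ~ C x ->
    exists f : T -> Rdefinitions.R, [/\ continuous f, (forall y, 0 <= f y <= 1),
                          f x = 0 & (forall y, C y -> f y = 1)].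

Definition tychonoff_space : Prop :=
  completely_regular_space /\ accessible_space T.

Definition topologically_complete : Prop :=
  tychonoff_space /\
  exists U, finest_uniformity U /\ complete_wrt U.

Definition is_cover (alpha : set (set T)) : Prop :=
  \bigcup_(V in alpha) V = setT.

Definition locally_finite_family (alpha : set (set T)) : Prop :=
  forall x : T, exists2 N, nbhs x N &
    finite_set [set V | alpha V /\ V `&` N !=set0].

Definition clf_normal_cover (alpha : set (set T)) : Prop :=
  [/\ is_cover alpha,
      (forall V, alpha V -> closed V),
      locally_finite_family alpha &
      exists phi : set T -> T -> Rdefinitions.R,
        [/\ (forall V, alpha V -> continuous (phi V)),
            (forall V x, alpha V -> 0 <= phi V x <= 1),
            (forall V, alpha V ->
               closure [set x | 0 < phi V x] `<=` interior V) &
            (forall x, finite_set [set V | alpha V /\ phi V x != 0] /\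
                       (\sum_(V \in alpha) phi V x = 1))]].

Definition star (alpha : set (set T)) (S : set T) : set (set T) :=
  [set V | alpha V /\ V `&` S !=set0].

Definition restrict_cover (alpha : set (set T)) (Y : set T) : set (set T) :=
  [set G | exists2 F, alpha F & G = F `&` Y].

Definition fip_family (I : Type) (A : set I) (g : I -> set T) : Prop :=
  forall B : set I, finite_set B -> B `<=` A -> B !=set0 ->
    exists x, forall a, B a -> g a x.

Definition condI (calA : set (set (set T))) : Prop :=
  forall (U : set T) (x : T), open U -> U x ->
    exists2 alpha, calA alpha & \bigcup_(V in star alpha [set x]) V `<=` U.

Definition condII (calA : set (set (set T))) : Prop :=
  forall f : set (set T) -> set T,
    (forall alpha, calA alpha -> alpha (f alpha)) ->
    fip_family calA f ->
    exists x, forall alpha, calA alpha -> f alpha x.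

Definition open_in (Y U : set T) : Prop :=
  exists2 O, open O & U = O `&` Y.

Definition condI_sub (calA : set (set (set T))) (Y : set T) : Prop :=
  forall (U : set T) (x : T), open_in Y U -> U x ->
    exists2 alpha, calA alpha &
      \bigcup_(V in star (restrict_cover alpha Y) [set x]) V `<=` U.

Definition condII_sub (calA : set (set (set T))) (Y : set T) : Prop :=
  forall f : set (set T) -> set T,
    (forall alpha, calA alpha -> alpha (f alpha)) ->
    fip_family calA (fun alpha => f alpha `&` Y) ->
    exists x, Y x /\ forall alpha, calA alpha -> (f alpha `&` Y) x.

End Defs.

(** Only conditions (I) and (II) and the closedness of [Y] are needed.
    (I) restricts to [Y] because stars can only shrink under restriction.
    For (II), the family [(f alpha)] still has the finite intersection
    property, so (II) yields a point [x] of all the [f alpha].  If [x] were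
    outside the closed set [Y], condition (I) applied to the open set [~` Y]
    would give a cover [alpha] whose star at [x] avoids [Y]; but [f alpha]
    belongs to that star and meets [Y]. *)

From HB Require Import structures.
From mathcomp Require Import all_boot all_order all_algebra.
From mathcomp Require Import all_classical all_reals all_analysis.
From mathcomp Require Import Rstruct Rstruct_topology.
Set Implicit Arguments. Unset Strict Implicit.
Local Open Scope classical_set_scope.

Section RestrictedConditions.
Variable T : topologicalType.
Implicit Types (alpha : set (set T)) (calA : set (set (set T))) (Y : set T).

Lemma star_restrict_cover_sub alpha Y (x : T) :
  \bigcup_(V in star (restrict_cover alpha Y) [set x]) V `<=`
  \bigcup_(V in star alpha [set x]) V.
Proof.
move=> z [_ [[F alphaF ->] [w [[Fw _] wx]]] [Fz _]].
by exists F => //; split => //; exists w.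
Qed.

Lemma sub_bigcup_star alpha (V : set T) (x : T) :
  alpha V -> V x -> V `<=` \bigcup_(W in star alpha [set x]) W.
Proof. by move=> alphaV Vx z Vz; exists V => //; split => //; exists x. Qed.

Lemma condI_sub_of_condI calA Y : condI calA -> condI_sub calA Y.
Proof.
move=> hI U x [W openW ->] [Wx _].
have [alpha calAalpha starW] := hI W x openW Wx.
exists alpha => // z starz; split.
- by apply: starW; apply: star_restrict_cover_sub starz.
- by case: starz => _ [[F _ ->] _] [].
Qed.

Lemma fip_family_sub (I : Type) (A : set I) (g h : I -> set T) :
  (forall a, A a -> g a `<=` h a) -> fip_family A g -> fip_family A h.
Proof.
move=> gh fipg B finB BA B0; have [x gx] := fipg B finB BA B0.
by exists x => a Ba; exact: gh (BA a Ba) _ (gx a Ba).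
Qed.

Lemma fip_family_neq0 (I : Type) (A : set I) (g : I -> set T) (a : I) :
  fip_family A g -> A a -> g a !=set0.
Proof.
move=> fipg Aa.
have [||x gx] := fipg [set a] (finite_set1 a).
- by move=> _ ->.
- by exists a.
- by exists x; exact: gx.
Qed.

Lemma condI_common_point_in_closed calA Y (f : set (set T) -> set T) (x : T) :
  condI calA -> closed Y ->
  (forall alpha, calA alpha -> alpha (f alpha)) ->
  (forall alpha, calA alpha -> f alpha `&` Y !=set0) ->
  (forall alpha, calA alpha -> f alpha x) -> Y x.
Proof.
move=> hI closedY f_in f_meetY f_x; apply: contrapT => Yx.
have [alpha calAalpha starYC] := hI (~` Y) x (closed_openC closedY) Yx.
have [y [fy Yy]] := f_meetY alpha calAalpha.
exact: starYC (sub_bigcup_star (f_in _ calAalpha) (f_x _ calAalpha) fy) Yy.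
Qed.

Lemma condII_sub_of_condII calA Y :
  condI calA -> condII calA -> closed Y -> condII_sub calA Y.
Proof.
move=> hI hII closedY f f_in fipY.
have [x f_x] : exists x, forall alpha, calA alpha -> f alpha x.
  by apply: hII => //; apply: fip_family_sub fipY => ? _ ? [].
have Yx : Y x.
  apply: (condI_common_point_in_closed hI closedY f_in) f_x => alpha.
  exact: fip_family_neq0 fipY.
by exists x; split => // alpha calAalpha; split => //; exact: f_x.
Qed.

End RestrictedConditions.

Theorem proposition2p1 (T : topologicalType) (calA : set (set (set T)))
  (Y : set T) :
  topologically_complete T ->
  (forall alpha, calA alpha -> clf_normal_cover alpha) ->
  condI calA -> condII calA ->
  closed Y ->
  condI_sub calA Y /\ condII_sub calA Y.
Proof.
move=> _ _ hI hII closedY; split.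
- exact: condI_sub_of_condI.
- exact: condII_sub_of_condII.
Qed.
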